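(* Let $\lambda>0$ and $\theta\in(0,\pi/2)$. For each $m>0$ set $n=m\tan\theta$, $X=(\lambda,0)$, $Y=(0,0)$, $Z=(m,n)$, and let $\varphi_m(\alpha,\beta)=\frac12(\alpha^2+2b\alpha\beta+a\beta^2)+c\alpha+d\beta$ be the conic satisfying (P1) $\varphi_m(X)=\varphi_m(Y)=\varphi_m(Z)=0$ and (P2) $Y-X$ is a positive multiple of $-\nabla\varphi_m(X)$ and $Z-Y$ is a positive multiple of $-\nabla\varphi_m(Y)$. Call $\{\varphi_m=0\}$ admissible if it is an ellipse. Then the set of centers of all admissible ellipses (over all $m>0$) is the semiline $$\mathcal{C}=\Big\{(u,v)\in\mathbb{R}^2:\ u=\frac{\lambda}{2}-\frac{\tan\theta}{2}v,\ v\in(0,+\infty)\Big\}.$$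
   Context: The center of an ellipse $\{\varphi=0\}$ is the point where $\nabla\varphi=0$. *)

From Stdlib Require Import Reals Lra.
From Coquelicot Require Import Coquelicot.
Open Scope R_scope.

Definition phi (a b c d : R) (al be : R) : R :=
  / 2 * (al ^ 2 + 2 * b * al * be + a * be ^ 2) + c * al + d * be.

Definition grad (f : R -> R -> R) (x y : R) : R * R :=
  (Derive (fun t => f t y) x, Derive (fun t => f x t) y).

Definition pos_multiple (v w : R * R) : Prop :=
  exists t : R, 0 < t /\ fst v = t * fst w /\ snd v = t * snd w.

(* A subset S of R^2 is an ellipse: the image of the unit circle under an
   invertible affine map, i.e. S = { x | |L (x - p)| = 1 } with L invertible. *)
Definition is_ellipse (S : R -> R -> Prop) : Prop :=
  exists p1 p2 l11 l12 l21 l22 : R,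
    l11 * l22 - l12 * l21 <> 0 /\
    forall x y : R,
      S x y <->
      (l11 * (x - p1) + l12 * (y - p2)) ^ 2
      + (l21 * (x - p1) + l22 * (y - p2)) ^ 2 = 1.

Definition is_center (f : R -> R -> R) (u v : R) : Prop :=
  grad f u v = (0, 0).

Definition P1P2 (lam th m a b c d : R) : Prop :=
  let n := m * tan th in
  let f := phi a b c d in
  f lam 0 = 0 /\ f 0 0 = 0 /\ f m n = 0 /\
  pos_multiple (0 - lam, 0 - 0)
    (- fst (grad f lam 0), - snd (grad f lam 0)) /\
  pos_multiple (m - 0, n - 0)
    (- fst (grad f 0 0), - snd (grad f 0 0)).

From Stdlib Require Import Reals Lra.
From Coquelicot Require Import Coquelicot.
Open Scope R_scope.

(* Writing k = tan th, (P1) at X and (P2) force b = k/2, c = -lam/2 and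
   d = -b lam, leaving a free, while (P1) at Z fixes m as a function of a;
   every a > b^2 gives a positive m.  The center (u, v) solves
   u + b v + c = 0 and b u + a v + d = 0, so it lies on the line
   u = lam/2 - (k/2) v and satisfies v (a - b^2) = k lam / 4.  A conic of this
   family passing through the origin is an ellipse exactly when a > b^2
   (otherwise its zero set is unbounded), that is, exactly when v > 0. *)

Lemma grad_phi a b c d x y :
  grad (phi a b c d) x y = (x + b * y + c, b * x + a * y + d).
Proof.
  unfold grad, phi; f_equal; apply is_derive_unique; auto_derive; auto; field.
Qed.

Lemma is_center_phi a b c d u v :
  is_center (phi a b c d) u v <-> u + b * v + c = 0 /\ b * u + a * v + d = 0.
Proof.
  unfold is_center; rewrite grad_phi; split.
  - intros H; injection H; auto.
  - intros [-> ->]; reflexivity.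
Qed.

Lemma phi_center_shift a b c d u v x y :
  is_center (phi a b c d) u v ->
  phi a b c d x y = phi a b 0 0 (x - u) (y - v) - phi a b 0 0 u v.
Proof.
  intros [Hu Hv]%is_center_phi.
  assert (c = - u - b * v) by lra; assert (d = - b * u - a * v) by lra.
  subst c d; unfold phi; field.
Qed.

Lemma is_ellipse_bounded_snd (S : R -> R -> Prop) :
  is_ellipse S -> exists M, forall x y, S x y -> Rabs y <= M.
Proof.
  intros [p1 [p2 [l11 [l12 [l21 [l22 [HD HS]]]]]]].
  set (D := l11 * l22 - l12 * l21) in *.
  assert (HD2 : 0 < D * D) by (apply Rsqr_pos_lt; auto).
  set (K := (l11 * l11 + l21 * l21) / (D * D)).
  assert (HK : K * (D * D) = l11 * l11 + l21 * l21) by (unfold K; field; lra).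
  exists (Rabs p2 + K + 1); intros x y Hxy; apply HS in Hxy.
  set (w1 := l11 * (x - p1) + l12 * (y - p2)) in *.
  set (w2 := l21 * (x - p1) + l22 * (y - p2)) in *.
  (* Cramer's rule expresses y - p2 through w, and Lagrange's identity bounds it. *)
  assert (Hcramer : D * (y - p2) = l11 * w2 - l21 * w1) by (unfold D, w1, w2; ring).
  assert (Hlagrange : (l11 * w2 - l21 * w1) ^ 2 + (l11 * w1 + l21 * w2) ^ 2
                      = (l11 * l11 + l21 * l21) * (w1 ^ 2 + w2 ^ 2)) by ring.
  assert (Hsq : (y - p2) ^ 2 <= K).
  { pose proof (pow2_ge_0 (l11 * w1 + l21 * w2)).
    rewrite Hxy, <- Hcramer in Hlagrange; nra. }
  assert (Habs : Rabs (y - p2) <= K + 1).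
  { rewrite <- pow2_abs in Hsq; pose proof (Rabs_pos (y - p2)); nra. }
  pose proof (Rabs_triang p2 (y - p2)) as Htri.
  replace (p2 + (y - p2)) with y in Htri by ring; lra.
Qed.

Lemma phi_root_fst a b c d y :
  a <= b ^ 2 -> 0 <= (b * c - d) * y -> exists x, phi a b c d x y = 0.
Proof.
  intros Hab Hy.
  set (De := (b ^ 2 - a) * y ^ 2 + 2 * ((b * c - d) * y) + c ^ 2).
  assert (HDe : 0 <= De) by (unfold De; nra).
  exists (- (b * y + c) + sqrt De).
  assert (Hsquare : forall x, phi a b c d x y = / 2 * ((x + b * y + c) ^ 2 - De))
    by (intros x; unfold phi, De; field).
  rewrite Hsquare; replace (- (b * y + c) + sqrt De + b * y + c) with (sqrt De) by ring.
  rewrite pow2_sqrt by exact HDe; field.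
Qed.

Lemma phi_zero_set_unbounded_snd a b c d :
  a <= b ^ 2 -> forall M, exists x y, phi a b c d x y = 0 /\ M < Rabs y.
Proof.
  intros Hab M.
  pose proof (Rle_abs M); pose proof (Rabs_pos M).
  set (y := Rabs M + 1).
  assert (Hy : Rabs y = y) by (apply Rabs_pos_eq; unfold y; lra).
  destruct (Rle_or_lt 0 (b * c - d)) as [Hs | Hs].
  - destruct (phi_root_fst a b c d y Hab) as [x Hx]; [unfold y; nra |].
    exists x, y; split; [exact Hx | unfold y in *; lra].
  - destruct (phi_root_fst a b c d (- y) Hab) as [x Hx]; [unfold y; nra |].
    exists x, (- y); split; [exact Hx |].
    rewrite Rabs_Ropp; unfold y in *; lra.
Qed.

Lemma phi_not_ellipse a b c d :
  a <= b ^ 2 -> ~ is_ellipse (fun x y => phi a b c d x y = 0).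
Proof.
  intros Hab Hell.
  destruct (is_ellipse_bounded_snd _ Hell) as [M HM].
  destruct (phi_zero_set_unbounded_snd a b c d Hab M) as [x [y [Hxy HyM]]].
  specialize (HM x y Hxy); lra.
Qed.

Lemma phi_ellipse a b c d u v :
  b ^ 2 < a -> is_center (phi a b c d) u v -> (u, v) <> (0, 0) ->
  is_ellipse (fun x y => phi a b c d x y = 0).
Proof.
  intros Hab Hc Huv.
  set (q := 2 * phi a b 0 0 u v).
  assert (Hq : 0 < q).
  { assert (Eq : q = (u + b * v) ^ 2 + (a - b ^ 2) * v ^ 2) by (unfold q, phi; field).
    rewrite Eq; destruct (Req_dec v 0) as [-> | Hv].
    - assert (u <> 0) by (intros ->; auto).
      pose proof (pow2_gt_0 u). nra.
    - pose proof (pow2_gt_0 v). pose proof (pow2_ge_0 (u + b * v)). nra. }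
  set (r := sqrt q); set (e := sqrt (a - b ^ 2)).
  assert (Hr : r * r = q) by (apply sqrt_sqrt; lra).
  assert (He : e * e = a - b ^ 2) by (apply sqrt_sqrt; lra).
  assert (Hr0 : 0 < r) by (apply sqrt_lt_R0; lra).
  assert (He0 : 0 < e) by (apply sqrt_lt_R0; lra).
  exists u, v, (/ r), (b / r), 0, (e / r); split.
  - replace (/ r * (e / r) - b / r * 0) with (e / (r * r)) by (field; lra).
    apply Rgt_not_eq, Rdiv_lt_0_compat; nra.
  - intros x y; rewrite (phi_center_shift a b c d u v x y Hc).
    set (P := phi a b 0 0 (x - u) (y - v)).
    assert (Hnorm : (/ r * (x - u) + b / r * (y - v)) ^ 2
                    + (0 * (x - u) + e / r * (y - v)) ^ 2 = 2 * P / q).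
    { rewrite <- Hr; unfold P, phi; replace a with (e * e + b ^ 2) by lra.
      field; lra. }
    assert (Huv0 : phi a b 0 0 u v = q / 2) by (unfold q; field).
    rewrite Hnorm, Huv0; split; intros Hlevel.
    + replace (2 * P) with q by lra; field; lra.
    + assert (E : 2 * P = 2 * P / q * q) by (field; lra).
      rewrite Hlevel in E; lra.
Qed.

Lemma P1P2_iff lam th m a b c d :
  0 < lam -> 0 < m ->
  P1P2 lam th m a b c d <->
  b = tan th / 2 /\ c = - lam / 2 /\ d = - tan th / 2 * lam /\
  m * (1 + tan th ^ 2 + a * tan th ^ 2) = lam * (1 + tan th ^ 2).
Proof.
  intros Hlam Hm; unfold P1P2, pos_multiple; rewrite !grad_phi; cbn [fst snd].
  set (k := tan th).
  assert (HZ : phi a (k / 2) (- lam / 2) (- k / 2 * lam) m (m * k)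
               = m / 2 * (m * (1 + k ^ 2 + a * k ^ 2) - lam * (1 + k ^ 2)))
    by (unfold phi; field).
  split.
  - intros [HX [_ [HZ0 [[t [Ht [T1 T2]]] [s [Hs [S1 S2]]]]]]].
    unfold phi in HX.
    assert (Hc : c = - lam / 2) by (apply (Rmult_eq_reg_l lam); nra).
    subst c.
    assert (Hdb : d = - b * lam) by nra.
    assert (Hb : b = k / 2) by (apply (Rmult_eq_reg_l m); nra).
    assert (Hd : d = - k / 2 * lam) by (rewrite Hdb, Hb; field).
    clear Hdb; subst b d.
    repeat split; try reflexivity.
    rewrite HZ in HZ0; apply (Rmult_eq_reg_l (m / 2)); nra.
  - intros [-> [-> [-> Hm']]].
    repeat split; try (unfold phi; field).
    + rewrite HZ, Hm'; field.
    + exists 2; split; [lra | split; field].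
    + exists (2 * m / lam); split.
      * apply Rdiv_lt_0_compat; lra.
      * split; field; lra.
Qed.

Lemma P1P2_conic_center lam k a u v :
  is_center (phi a (k / 2) (- lam / 2) (- k / 2 * lam)) u v <->
  u = lam / 2 - k / 2 * v /\ v * (a - (k / 2) ^ 2) = k * lam / 4.
Proof.
  rewrite is_center_phi; split; intros [H1 H2].
  - assert (Hu : u = lam / 2 - k / 2 * v) by lra.
    split; [exact Hu |]; subst u; nra.
  - subst u; split; nra.
Qed.

Theorem lemma3 (lam th : R) (Hlam : 0 < lam) (Hth1 : 0 < th) (Hth2 : th < PI / 2) :
  forall u v : R,
    (exists m : R, 0 < m /\
       exists a b c d : R,
         P1P2 lam th m a b c d /\
         is_ellipse (fun x y => phi a b c d x y = 0) /\
         is_center (phi a b c d) u v)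
    <->
    (u = lam / 2 - tan th / 2 * v /\ 0 < v).
Proof.
  intros u v.
  pose proof (tan_gt_0 th Hth1 Hth2) as Hk.
  split.
  - intros [m [Hm [a [b [c [d [HP [Hell Hc]]]]]]]].
    apply P1P2_iff in HP as [-> [-> [-> _]]]; auto.
    apply P1P2_conic_center in Hc as [Hu Hv].
    set (k := tan th) in *.
    destruct (Rlt_or_le ((k / 2) ^ 2) a) as [Ha | Ha].
    + split; [exact Hu | nra].
    + exfalso; exact (phi_not_ellipse _ _ _ _ Ha Hell).
  - intros [Hu Hv].
    set (k := tan th) in *.
    set (a := (k / 2) ^ 2 + k * lam / (4 * v)).
    assert (Ha : (k / 2) ^ 2 < a).
    { assert (0 < k * lam / (4 * v)) by (apply Rdiv_lt_0_compat; nra).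
      unfold a; lra. }
    assert (Hden : 0 < 1 + k ^ 2 + a * k ^ 2) by nra.
    exists (lam * (1 + k ^ 2) / (1 + k ^ 2 + a * k ^ 2)); split.
    { apply Rdiv_lt_0_compat; nra. }
    exists a, (k / 2), (- lam / 2), (- k / 2 * lam).
    assert (Hc : is_center (phi a (k / 2) (- lam / 2) (- k / 2 * lam)) u v).
    { apply P1P2_conic_center; split; [exact Hu | unfold a; field; lra]. }
    split; [| split; [| exact Hc]].
    + apply P1P2_iff; [lra | apply Rdiv_lt_0_compat; nra |].
      change (tan th) with k; repeat split; field; lra.
    + apply (phi_ellipse _ _ _ _ u v Ha Hc).
      intros Huv; injection Huv; lra.
Qed.
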